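(* Let $T:M_d\to M_d$ be completely positive with $T(I)\le I$ and finite stabilization index, and let $Q$ be its orbit-support projection. Then \[ \mathrm{rank}(Q)\le\mathrm{rank}(d(T))+\mathrm{rank}(T(I))-\dim\big(\mathrm{Ran}(d(T))\cap\mathrm{Ran}(T(I))\big), \] and in particular $\mathrm{rank}(Q)\le\min\{d,\ \mathrm{rank}(d(T))+\mathrm{rank}(T(I))\}$.
   Context: $d(T)=I-T(I)$; $n_T=\min\{n\ge1: T^n(d(T))=0\}$. For positive semidefinite $x$, $\mathrm{supp}(x)$ is the orthogonal projection onto $\mathrm{Ran}(x)$. The orbit-support projection is $Q=\bigvee_{k<n_T}\mathrm{supp}(T^k(d(T)))$. *)

From HB Require Import structures.
From mathcomp Require Import all_boot all_order all_algebra.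
Set Implicit Arguments. Unset Strict Implicit. Unset Printing Implicit Defensive.
Import Order.TTheory GRing.Theory Num.Theory.
Local Open Scope ring_scope.

(* Matrices over a numeric algebraically closed field C (e.g. the complex
   numbers); M_d is 'M[C]_d. *)
Section Defs.
Variable C : numClosedFieldType.

Definition ctr m n (A : 'M[C]_(m, n)) : 'M[C]_(n, m) := \matrix_(i, j) (A j i)^*.

Definition psd m (A : 'M[C]_m) : Prop :=
  forall v : 'cV[C]_m, 0 <= (ctr v *m A *m v) 0 0.

Definition loewner_le m (A B : 'M[C]_m) : Prop := psd (B - A).

Definition completely_positive d (T : 'M[C]_d -> 'M[C]_d) : Prop :=
  forall (n : nat) (X : 'I_n -> 'I_n -> 'M[C]_d),
    psd (\mxblock_(i < n, j < n) X i j) ->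
    psd (\mxblock_(i < n, j < n) T (X i j)).

Definition defect d (T : 'M[C]_d -> 'M[C]_d) : 'M[C]_d := 1%:M - T 1%:M.

Definition stab_index d (T : 'M[C]_d -> 'M[C]_d) (n : nat) : Prop :=
  (1 <= n)%N /\ iter n T (defect T) = 0 /\
  forall m, (1 <= m < n)%N -> iter m T (defect T) <> 0.

(* Range (column space) of A, encoded as a row space: Ran(A) = rowspace(A^T) *)
Definition Ran m n (A : 'M[C]_(m, n)) : 'M[C]_(n, m) := A^T.

Definition orth_proj d (P : 'M[C]_d) : Prop := P *m P = P /\ ctr P = P.

Definition is_supp d (x P : 'M[C]_d) : Prop :=
  orth_proj P /\ (Ran P == Ran x)%MS.

Definition is_join_proj d (n : nat) (P : nat -> 'M[C]_d) (Q : 'M[C]_d) : Prop :=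
  orth_proj Q /\ (Ran Q == \sum_(k < n) Ran (P k))%MS.

End Defs.

From HB Require Import structures.
From mathcomp Require Import all_boot all_order all_algebra.
From mathcomp Require Import sesquilinear spectral ring zify.
Import Order.TTheory GRing.Theory Num.Theory.
Local Open Scope ring_scope.
Set Implicit Arguments. Unset Strict Implicit.

(* Each T^k(d(T)) with k >= 1 lies below T(I) in the Loewner order, since
   T^k(d(T)) <= T^k(I) <= T(I) by positivity of T and T(I) <= I.  For
   positive semidefinite A <= B the range of A lies in that of B, so
   Ran Q lies in Ran d(T) + Ran T(I), and the bound is the dimension formula
   for a sum of two subspaces.  Neither the finiteness of the stabilization
   index nor the fact that Q is a projection is needed. *)

Lemma trmx_sub_of_kernel (F : fieldType) m1 m2 n
    (A : 'M[F]_(n, m1)) (B : 'M_(n, m2)) :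
  (forall v : 'rV_n, v *m B = 0 -> v *m A = 0) -> (A^T <= B^T)%MS.
Proof.
move=> kerBA; have := mulmx_coker B^T.
move/(congr1 trmx); rewrite trmx_mul trmxK trmx0 => cokerB.
rewrite submxE -trmx_eq0 trmx_mul trmxK; apply/eqP/row_matrixP => i.
by rewrite row_mul row0 kerBA // -row_mul cokerB row0.
Qed.

Lemma mxrank_sub_addsmx (F : fieldType) m1 m2 m3 n
    (U : 'M[F]_(m1, n)) (V : 'M_(m2, n)) (W : 'M_(m3, n)) :
  (U <= V + W)%MS -> (\rank U <= \rank V + \rank W - \rank (V :&: W))%N.
Proof. by move=> /mxrankS sUVW; have := mxrank_sum_cap V W; lia. Qed.

Section PositiveSemidefinite.
Variable C : numClosedFieldType.

Lemma ctr_trC m n (A : 'M[C]_(m, n)) : ctr A = map_mx Num.Def.conjC A^T.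
Proof. by apply/matrixP => i j; rewrite !mxE. Qed.

Lemma ctrK m n (A : 'M[C]_(m, n)) : ctr (ctr A) = A.
Proof. by apply/matrixP => i j; rewrite !mxE conjCK. Qed.

Lemma ctrD m n (A B : 'M[C]_(m, n)) : ctr (A + B) = ctr A + ctr B.
Proof. by apply/matrixP => i j; rewrite !mxE rmorphD. Qed.

Lemma ctrZ m n (a : C) (A : 'M[C]_(m, n)) : ctr (a *: A) = a^* *: ctr A.
Proof. by apply/matrixP => i j; rewrite !mxE rmorphM. Qed.

Lemma psd0 m : psd (0 : 'M[C]_m).
Proof. by move=> v; rewrite mulmx0 mul0mx mxE. Qed.

Lemma psd1 m : psd (1%:M : 'M[C]_m).
Proof.
move=> v; rewrite mulmx1 mxE; apply: sumr_ge0 => j _.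
by rewrite mxE mulrC mul_conjC_ge0.
Qed.

Lemma psdD m (A B : 'M[C]_m) : psd A -> psd B -> psd (A + B).
Proof. by move=> psdA psdB v; rewrite mulmxDr mulmxDl mxE addr_ge0. Qed.

Lemma psd_castmx m m' (e : m = m') (A : 'M[C]_m) :
  psd (castmx (e, e) A) <-> psd A.
Proof. by case: m' / e; rewrite castmx_id. Qed.

Lemma loewner_le_refl m (A : 'M[C]_m) : loewner_le A A.
Proof. by rewrite /loewner_le subrr; apply: psd0. Qed.

Lemma loewner_le_trans m (B A D : 'M[C]_m) :
  loewner_le A B -> loewner_le B D -> loewner_le A D.
Proof.
by move=> leAB leBD; rewrite /loewner_le -[D](subrK B) -addrA; apply: psdD.
Qed.

Definition mxform m (A : 'M[C]_m) (u v : 'cV[C]_m) : C := (ctr u *m A *m v) 0 0.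

Lemma mxformDl m (A : 'M[C]_m) u v w :
  mxform A (u + v) w = mxform A u w + mxform A v w.
Proof. by rewrite /mxform ctrD !mulmxDl mxE. Qed.

Lemma mxformDr m (A : 'M[C]_m) u v w :
  mxform A u (v + w) = mxform A u v + mxform A u w.
Proof. by rewrite /mxform mulmxDr mxE. Qed.

Lemma mxformZl m (A : 'M[C]_m) a u v : mxform A (a *: u) v = a^* * mxform A u v.
Proof. by rewrite /mxform ctrZ -!scalemxAl mxE. Qed.

Lemma mxformZr m (A : 'M[C]_m) a u v : mxform A u (a *: v) = a * mxform A u v.
Proof. by rewrite /mxform -scalemxAr mxE. Qed.

Lemma real_quadratic_ge0_eq0 (b c : C) : 0 <= c ->
  (forall s, s \is Num.real -> 0 <= s * b + s * s * c) -> b = 0.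
Proof.
move=> c_ge0 quad_ge0.
have c1_real : c + 1 \is Num.real by rewrite rpredD ?rpred1 ?ger0_real.
have c1_neq0 : c + 1 != 0 by rewrite gt_eqF // ltr_wpDl.
have b_real : b \is Num.real.
  have := quad_ge0 1 (rpred1 _); rewrite !mul1r => /ger0_real bc_real.
  by rewrite -[b](addrK c) rpredB // ger0_real.
have t_real : b / (c + 1) \is Num.real by rewrite rpredM // rpredV.
have := quad_ge0 (- (b / (c + 1))); rewrite rpredN => /(_ t_real).
have -> : - (b / (c + 1)) * b + - (b / (c + 1)) * - (b / (c + 1)) * c
        = - (b / (c + 1)) ^+ 2 by field.
rewrite oppr_ge0 => t2_le0.
have /eqP : (b / (c + 1)) ^+ 2 = 0.
  by apply/le_anti; rewrite t2_le0 real_exprn_even_ge0.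
by rewrite expf_eq0 /= mulf_eq0 invr_eq0 (negPf c1_neq0) orbF => /eqP.
Qed.

Lemma psd_mxform_eq0 m (A : 'M[C]_m) w u :
  psd A -> mxform A w w = 0 -> mxform A w u = 0.
Proof.
(* Positivity at w + t u for real and for purely imaginary t gives a + b = 0
   and b = a. *)
move=> psdA ww0; set a := mxform A u w; set b := mxform A w u.
have c_ge0 : 0 <= mxform A u u by exact: psdA.
have ge0 t : 0 <= t * b + t^* * a + t^* * t * mxform A u u.
  have : 0 <= mxform A (w + t *: u) (w + t *: u) := psdA _.
  by rewrite mxformDl !mxformDr !mxformZl !mxformZr ww0 add0r addrA mulrA.
have ab0 : a + b = 0.
  apply: real_quadratic_ge0_eq0 c_ge0 _ => s /conj_Creal s_real.
  by have := ge0 s; rewrite s_real; congr (0 <= _); ring.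
have iba0 : 'i * (b - a) = 0.
  apply: real_quadratic_ge0_eq0 c_ge0 _ => s /conj_Creal s_real.
  have := ge0 (s * 'i).
  have -> : (s * 'i)^* = - (s * 'i) by rewrite rmorphM /= s_real conjCi mulrN.
  have -> : - (s * 'i) * (s * 'i) = s * s.
    have i2 : 'i * 'i = -1 :> C by rewrite -expr2 sqrCi.
    by rewrite mulNr mulrACA i2 mulrN1 opprK.
  by congr (0 <= _); ring.
move/eqP: iba0; rewrite mulf_eq0 (negPf (neq0Ci C)) subr_eq0 /= => /eqP ba.
by move: ab0; rewrite ba -mulr2n => /eqP; rewrite mulrn_eq0 => /eqP.
Qed.

Lemma psd_mxform_eq0_rowker m (A : 'M[C]_m) w :
  psd A -> mxform A w w = 0 -> ctr w *m A = 0.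
Proof.
move=> psdA ww0; apply/eqP; have := dnorm_eq0 (@dotmx C m) (ctr w *m A).
by rewrite /= dotmxE -ctr_trC => <-; apply/eqP/(psd_mxform_eq0 _ psdA ww0).
Qed.

Lemma psd_le_rowker m (A B : 'M[C]_m) (r : 'rV_m) :
  psd A -> loewner_le A B -> r *m B = 0 -> r *m A = 0.
Proof.
move=> psdA leAB; rewrite -[r]ctrK => rB0; apply: psd_mxform_eq0_rowker => //.
have : 0 <= mxform (B - A) (ctr r) (ctr r) := leAB _.
rewrite /mxform mulmxBr rB0 sub0r mulNmx mxE oppr_ge0 => rA_le0.
by apply/le_anti; rewrite rA_le0 psdA.
Qed.

Lemma psd_le_Ran m (A B : 'M[C]_m) :
  psd A -> loewner_le A B -> (Ran A <= Ran B)%MS.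
Proof.
by move=> psdA leAB; apply: trmx_sub_of_kernel => r; apply: psd_le_rowker.
Qed.

End PositiveSemidefinite.

Section CompletelyPositive.
Variables (C : numClosedFieldType) (d : nat) (T : 'M[C]_d -> 'M[C]_d).
Hypotheses (linT : linear T) (cpT : completely_positive T).

Lemma cp_psd X : psd X -> psd (T X).
Proof.
rewrite {1}(mxEmxblock X) (mxEmxblock (T X)) !psd_castmx.
exact: (@cpT 1 (fun _ _ => X)).
Qed.

Lemma psd_iter k X : psd X -> psd (iter k T X).
Proof. by move=> psdX; elim: k => //= k; apply: cp_psd. Qed.

Lemma iterB k A B : iter k T (A - B) = iter k T A - iter k T B.
Proof.
elim: k => //= k ->.
by rewrite -scaleN1r addrC linT scaleN1r addrC.
Qed.

Lemma iter_loewner_le k A B :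
  loewner_le A B -> loewner_le (iter k T A) (iter k T B).
Proof. by rewrite /loewner_le -iterB; apply: psd_iter. Qed.

Hypothesis leT1 : loewner_le (T 1%:M) 1%:M.

Lemma iter_unit_le k : loewner_le (iter k.+1 T 1%:M) (T 1%:M).
Proof.
elim: k => [|k IHk]; first exact: loewner_le_refl.
by rewrite iterSr; apply: loewner_le_trans IHk; apply: iter_loewner_le.
Qed.

Lemma iter_defect_le k : loewner_le (iter k.+1 T (defect T)) (T 1%:M).
Proof.
apply: loewner_le_trans (iter_unit_le k); apply: iter_loewner_le.
by rewrite /loewner_le /defect opprB addrC subrK; apply/cp_psd/psd1.
Qed.

Lemma Ran_iter_defect k :
  (Ran (iter k T (defect T)) <= Ran (defect T) + Ran (T 1%:M))%MS.
Proof.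
case: k => [|k]; first exact: addsmxSl.
apply: submx_trans (addsmxSr _ _); apply: psd_le_Ran (iter_defect_le k).
exact: psd_iter.
Qed.

End CompletelyPositive.

Theorem proposition8p29 (C : numClosedFieldType) (d : nat)
  (T : 'M[C]_d -> 'M[C]_d) (nT : nat) (P : nat -> 'M[C]_d) (Q : 'M[C]_d) :
  linear T ->
  completely_positive T ->
  loewner_le (T 1%:M) 1%:M ->
  stab_index T nT ->
  (forall k, (k < nT)%N -> is_supp (iter k T (defect T)) (P k)) ->
  is_join_proj nT P Q ->
  ((\rank Q <= \rank (defect T) + \rank (T 1%:M)
               - \rank (Ran (defect T) :&: Ran (T 1%:M))%MS)%N
   /\ (\rank Q <= minn d (\rank (defect T) + \rank (T 1%:M)))%N).
Proof.
move=> linT cpT leT1 _ suppP [_ /andP[sQP _]].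
have sQ : (Ran Q <= Ran (defect T) + Ran (T 1%:M))%MS.
  apply: submx_trans sQP _; apply/sumsmx_subP => k _.
  have [_ /andP[sPk _]] := suppP k (ltn_ord k).
  exact: submx_trans sPk (Ran_iter_defect linT cpT leT1 k).
have := mxrank_sub_addsmx sQ; rewrite /Ran !mxrank_tr => rankQ_le.
split=> //; rewrite leq_min rank_leq_row.
exact: leq_trans rankQ_le (leq_subr _ _).
Qed.
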